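(* Let $\Lambda$ be the set of all injections $t$ whose domain $\operatorname{dom}t$ is a countable ordinal, with values in $\omega=\{0,1,2,\dots\}$, and whose range is a co-infinite subset of $\omega$, ordered by extension ($t\preceq u$ iff $\operatorname{dom}t\subseteq\operatorname{dom}u$ and $u|_{\operatorname{dom}t}=t$). Let $\lambda(t)=\sum_{\alpha\in\operatorname{dom}t}2^{-t(\alpha)}$ and let $\mathcal{T}_\lambda$ be the topology on $\Lambda$ in which a base of neighbourhoods of $t$ consists of the sets $\{u\in\Lambda: t\preceq u,\ \lambda(u)<\lambda(t)+\epsilon\}$, $\epsilon>0$. Then $(\Lambda,\mathcal{T}_\lambda)$ is a Baire space.
   Context: A Baire space is a topological space in which every countable intersection of dense open sets is dense. *)

From HB Require Import structures.
From mathcomp Require Import all_boot all_order all_algebra.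
From mathcomp Require Import all_classical all_reals all_analysis.
From mathcomp Require Import Rstruct Rstruct_topology.
Set Implicit Arguments. Unset Strict Implicit. Unset Printing Implicit Defensive.
Import Order.TTheory GRing.Theory Num.Theory.
Local Open Scope classical_set_scope.
Local Open Scope ring_scope.

Notation RR := Rdefinitions.R.

(* An element t of Lambda (injection from a countable ordinal into nat with
   co-infinite range) is encoded by its range [rng t] together with the
   strict well-order [ord t] on the range transported from dom t:
   [ord t m n] iff t^-1(m) < t^-1(n).  Conversely every strict well-order on
   a subset of nat has a countable ordinal order type, and t is recovered as
   the enumeration of the range in that order. *)
Record Lambda := MkLambda {
  rng : set nat ;
  ord : nat -> nat -> Prop ;
  ord_field : forall m n, ord m n -> rng m /\ rng n ;
  ord_irrefl : forall m, ~ ord m m ;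
  ord_trans : forall m n p, ord m n -> ord n p -> ord m p ;
  ord_total : forall m n, rng m -> rng n -> m <> n -> ord m n \/ ord n m ;
  ord_wf : well_founded ord ;
  rng_coinfinite : ~ finite_set (~` rng)
}.

HB.instance Definition _ := gen_eqMixin Lambda.
HB.instance Definition _ := gen_choiceMixin Lambda.

(* t ≼ u : dom t is an initial segment of dom u and u restricted to dom t is t,
   i.e. rng t ⊆ rng u, rng t is an initial segment of (rng u, ord u),
   and the two orders agree on rng t. *)
Definition ext (t u : Lambda) : Prop :=
  [/\ rng t `<=` rng u,
      (forall m n, rng t n -> ord u m n -> rng t m) &
      (forall m n, rng t m -> rng t n -> (ord t m n <-> ord u m n))].

Definition lam (t : Lambda) : \bar RR :=
  (\sum_(i <oo | i \in rng t) ((2 : RR) ^- i)%:E)%E.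

Definition lbase (t : Lambda) (eps : RR) : set Lambda :=
  [set u | ext t u /\ (lam u < lam t + eps%:E)%E].

Definition lopen (A : set Lambda) : Prop :=
  forall t, A t -> exists2 eps : RR, 0 < eps & lbase t eps `<=` A.

Lemma lopenT : lopen setT.
Proof. by move=> t _; exists 1. Qed.

Lemma lopenI : setI_closed lopen.
Proof.
move=> A B oA oB t [/oA [e1 e10 s1] /oB [e2 e20 s2]].
exists (Num.min e1 e2); first by rewrite lt_min e10 e20.
move=> u [tu lu]; split.
- apply: s1; split => //; apply: (lt_le_trans lu).
  by rewrite leeD2l // lee_fin ge_min lexx.
- apply: s2; split => //; apply: (lt_le_trans lu).
  by rewrite leeD2l // lee_fin ge_min lexx orbT.
Qed.

Lemma lopen_bigU (I : Type) (f : I -> set Lambda) :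
  (forall i, lopen (f i)) -> lopen (\bigcup_i f i).
Proof.
move=> oF t [i _ /oF [e e0 s]]; exists e; first by [].
by move=> u /s fu; exists i.
Qed.

HB.instance Definition _ :=
  isOpenTopological.Build Lambda lopenT lopenI lopen_bigU.

Definition baire_space (T : topologicalType) : Prop :=
  forall F : nat -> set T, (forall n, open (F n)) -> (forall n, dense (F n)) ->
    dense (\bigcap_n F n).

From HB Require Import structures.
From mathcomp Require Import all_boot all_order all_algebra.
From mathcomp Require Import all_classical all_reals all_analysis.
From mathcomp Require Import Rstruct Rstruct_topology lra.
Set Implicit Arguments. Unset Strict Implicit. Unset Printing Implicit Defensive.
Import Order.TTheory GRing.Theory Num.Theory.
Local Open Scope classical_set_scope.
Local Open Scope ring_scope.

(* Given a basic set [lbase t e] and dense open sets [F n], choose inductively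
   [t_(n+1)] extending [t_n] with [lbase t_(n+1) (2 e_(n+1))] inside
   [lbase t_n e_n] and [F n].  The [t_n] form a chain, whose union is an
   element [u] of [Lambda] provided its range stays co-infinite.  To ensure
   this, each step also reserves some [k_n >= n] outside [rng t_(n+1)] with
   [2^-k_n >= e_(n+1)]: as [lam] stays below [lam t_(n+1) + e_(n+1)] along
   the chain, [k_n] can never be added.  Finally [lam u = sup lam t_n] is at
   most [lam t_(n+1) + e_(n+1)], so [u] lies in every [lbase t_(n+1)
   (2 e_(n+1))], hence in [lbase t e] and in every [F n]. *)

Lemma infinite_natP (A : set nat) :
  ~ finite_set A <-> forall n, exists2 k, (n <= k)%N & A k.
Proof.
split=> [Ainf n | Aunb /finite_fsetP [X AX]].
- have [k [Ak /negP]] := infinite_setN0 (infinite_setD Ainf (finite_II n)).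
  by rewrite -leqNgt; exists k.
- have [k + Ak] := Aunb (\max_(x <- finmap.enum_fset X) x).+1.
  by rewrite ltnNge leq_bigmax_seq //; move: Ak; rewrite AX.
Qed.

Lemma nondecreasing_bigcup_cover (A : nat -> set nat) :
  {homo A : i j / (i <= j)%N >-> i `<=` j} ->
  forall N, exists c, forall i, (i < N)%N -> (\bigcup_n A n) i -> A c i.
Proof.
move=> A_nd; elim=> [|N [c IH]]; first by exists 0%N.
have [[c' _ Ac'N]|UN] := pselect ((\bigcup_n A n) N).
  exists (maxn c c') => i; rewrite ltnS leq_eqVlt => /orP [/eqP -> _|iN Ui].
    exact: A_nd (leq_maxr c c') _ Ac'N.
  exact: A_nd (leq_maxl c c') _ (IH i iN Ui).
by exists c => i; rewrite ltnS leq_eqVlt => /orP [/eqP -> //|/IH].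
Qed.

Lemma sum_invexp2 N : \sum_(0 <= i < N) (2 : RR) ^- i = 2 - 2 * (2 : RR) ^- N.
Proof.
elim: N => [|N IH]; first by rewrite big_geq // expr0 invr1 mulr1 subrr.
rewrite big_nat_recr //= IH.
have -> : (2 : RR) ^- N = 2 * (2 : RR) ^- N.+1 by rewrite exprS invfM mulrA divff ?mul1r.
lra.
Qed.

Local Open Scope ereal_scope.

Lemma invexp2_ge0 (i : nat) : 0 <= ((2 : RR) ^- i)%:E.
Proof. by rewrite lee_fin invr_ge0 exprn_ge0. Qed.

Definition wsum (A : set nat) : \bar RR :=
  \sum_(i <oo | i \in A) ((2 : RR) ^- i)%:E.

Lemma wsum_ge0 A : 0 <= wsum A.
Proof. by apply: nneseries_ge0 => *; exact: invexp2_ge0. Qed.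

Lemma wsum_le2 A : wsum A <= 2%:E.
Proof.
apply: lime_le; first by apply: is_cvg_nneseries => *; exact: invexp2_ge0.
apply: nearW => N /=; apply: (@le_trans _ _ (\sum_(0 <= i < N) ((2 : RR) ^- i)%:E)).
  rewrite [leLHS]big_mkcond /=; apply: lee_sum => i _.
  by case: ifP => // _; exact: invexp2_ge0.
rewrite sumEFin sum_invexp2 lee_fin.
have : ((0 : RR) <= 2 * (2 : RR) ^- N)%R by rewrite mulr_ge0 // invr_ge0 exprn_ge0.
lra.
Qed.

Lemma wsum_fin_num A : wsum A \is a fin_num.
Proof. by rewrite ge0_fin_numE ?wsum_ge0 // (le_lt_trans (wsum_le2 A)) ?ltry. Qed.

Lemma wsumD1_le A B k : A `<=` B -> B k -> ~ A k ->
  ((2 : RR) ^- k)%:E + wsum A <= wsum B.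
Proof.
move=> AB Bk Ak; rewrite [leRHS](@nneseriesD1 _ _ k) //; last by rewrite in_setE.
rewrite leeD2l //; apply: subset_lee_nneseries => [i _|i]; first exact: invexp2_ge0.
rewrite !in_setE => Ai; apply/andP; split; first by rewrite in_setE; exact: AB.
by apply/eqP => ik; apply: Ak; rewrite -ik.
Qed.

Lemma wsum_bigcup_le (A : nat -> set nat) (L : \bar RR) m :
  {homo A : i j / (i <= j)%N >-> i `<=` j} ->
  (forall c, (m <= c)%N -> wsum (A c) <= L) -> wsum (\bigcup_n A n) <= L.
Proof.
move=> A_nd AL; apply: lime_le.
  by apply: is_cvg_nneseries => *; exact: invexp2_ge0.
apply: nearW => N /=; have [c cover] := nondecreasing_bigcup_cover A_nd N.
apply: le_trans (AL _ (leq_maxr c m)).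
apply: le_trans (nneseries_lim_ge N _); last by move=> *; exact: invexp2_ge0.
rewrite big_nat_cond [leRHS]big_nat_cond.
apply: lee_sum_nneg_subset => [i|i _]; last exact: invexp2_ge0.
rewrite -!topredE /= => /andP [iN]; rewrite iN !in_setE => /(cover _ iN) Aci.
exact: A_nd (leq_maxl c m) _ Aci.
Qed.

Lemma lam_fin_num t : lam t \is a fin_num.
Proof. exact: wsum_fin_num. Qed.

Lemma lamE t : lam t = (fine (lam t))%:E.
Proof. by rewrite fineK // lam_fin_num. Qed.

Local Close Scope ereal_scope.

Lemma ext_refl t : ext t t.
Proof. by split => // m n _ /ord_field []. Qed.

Lemma ext_trans t u v : ext t u -> ext u v -> ext t v.
Proof.
move=> [tu_rng tu_init tu_ord] [uv_rng uv_init uv_ord]; split.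
- by move=> x /tu_rng /uv_rng.
- move=> m n tn vmn; have um : rng u m by apply: uv_init vmn; exact: tu_rng.
  by apply: (tu_init m n tn); apply/(uv_ord _ _ um (tu_rng _ tn)).
- move=> m n tm tn; rewrite (tu_ord _ _ tm tn).
  exact: uv_ord (tu_rng _ tm) (tu_rng _ tn).
Qed.

Lemma lbase_refl t (e : RR) : 0 < e -> lbase t e t.
Proof. by move=> e_gt0; split; [exact: ext_refl|rewrite lamE -EFinD lte_fin; lra]. Qed.

Lemma lbase_le t (e1 e2 : RR) : e1 <= e2 -> lbase t e1 `<=` lbase t e2.
Proof.
move=> e12 u [tu lu]; split => //; apply: (lt_le_trans lu).
by rewrite leeD2l ?lee_fin // lam_fin_num.
Qed.

(* A point of [lbase t e] has a basic neighbourhood inside it since [ext]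
   is transitive and there is room [lam t + e - lam u] left for [lam]. *)
Lemma lbase_open t (e : RR) : open (lbase t e).
Proof.
move=> u [tu]; rewrite (lamE u) (lamE t) -EFinD lte_fin => lu.
exists (fine (lam t) + e - fine (lam u)); first lra.
move=> v [uv]; rewrite (lamE v) (lamE u) -EFinD lte_fin => lv.
by split; [exact: ext_trans uv|rewrite (lamE v) (lamE t) -EFinD lte_fin; lra].
Qed.

Section ChainUnion.
Variable T : nat -> Lambda.
Hypothesis T_chain : forall a c, (a <= c)%N -> ext (T a) (T c).

Let U := \bigcup_n rng (T n).
Let O m n := exists c, ord (T c) m n.

Lemma rng_chain_nondecreasing : {homo (rng \o T) : a c / (a <= c)%N >-> a `<=` c}.
Proof. by move=> a c /T_chain []. Qed.

Let ord_chain a c m n : (a <= c)%N -> ord (T a) m n -> ord (T c) m n.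
Proof.
move=> ac amn; have [am an] := ord_field amn.
by have [_ _ /(_ _ _ am an) []] := T_chain ac; auto.
Qed.

Let ord_chain_pred k a p m : ord (T k) p m -> rng (T a) m -> ord (T a) p m.
Proof.
move=> kpm am; have [_ init agree] := T_chain (leq_maxl a k).
have mpm := ord_chain (leq_maxr a k) kpm.
by apply/(agree _ _ (init _ _ am mpm) am).
Qed.

Let O_field m n : O m n -> U m /\ U n.
Proof. by move=> [c /ord_field [cm cn]]; split; exists c. Qed.

Let O_irrefl m : ~ O m m.
Proof. by move=> [c /ord_irrefl]. Qed.

Let O_trans m n p : O m n -> O n p -> O m p.
Proof.
move=> [a amn] [b bnp]; exists (maxn a b).
exact: ord_trans (ord_chain (leq_maxl a b) amn) (ord_chain (leq_maxr a b) bnp).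
Qed.

Let O_total m n : U m -> U n -> m <> n -> O m n \/ O n m.
Proof.
move=> [a _ am] [b _ bn] mn.
have [rng_a _ _] := T_chain (leq_maxl a b); have [rng_b _ _] := T_chain (leq_maxr a b).
by case: (ord_total (rng_a _ am) (rng_b _ bn) mn) => ?; [left|right]; exists (maxn a b).
Qed.

(* Predecessors in [O] of a point of [rng (T a)] are [ord (T a)]-predecessors,
   so well-foundedness is inherited from [ord (T a)]. *)
Let O_wf : well_founded O.
Proof.
have Acc_rng a m : rng (T a) m -> Acc O m.
  elim/(well_founded_ind (@ord_wf (T a))): m => m IH am.
  constructor => p [k kpm]; have apm := ord_chain_pred kpm am.
  by apply: (IH _ apm); have [] := ord_field apm.
by move=> m; constructor => p [k /ord_field [kp _]]; exact: Acc_rng kp.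
Qed.

Lemma chain_union : ~ finite_set (~` U) ->
  exists u : Lambda, rng u = U /\ forall n, ext (T n) u.
Proof.
move=> U_coinf; exists (MkLambda O_field O_irrefl O_trans O_total O_wf U_coinf).
split=> // n; split=> /=.
- by move=> x nx; exists n.
- by move=> m p np [k /ord_chain_pred /(_ np) /ord_field []].
- by move=> m p nm np; split => [nmp|[k /ord_chain_pred]]; [exists n|exact].
Qed.

End ChainUnion.

Section Baire.
Variable F : nat -> set Lambda.
Hypothesis F_open : forall n, open (F n).
Hypothesis F_dense : forall n, dense (F n).

Definition descent_step n t e s e' k :=
  [/\ 0 < e', e' <= (2 : RR) ^- k, ~ rng s k, (n <= k)%N &
      lbase s (2 * e') `<=` lbase t e `&` F n].

Lemma descent_step_exists n t (e : RR) : 0 < e ->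
  exists s e' k, descent_step n t e s e' k.
Proof.
move=> e_gt0.
have [s [ts Fs]] := F_dense n (ex_intro _ t (lbase_refl t e_gt0)) (@lbase_open t e).
have [d d_gt0 sub_d] := lopenI (@lbase_open t e) (@F_open n) (conj ts Fs).
have [k nk sk] := (infinite_natP (~` rng s)).1 (@rng_coinfinite s) n.
have invexp2_gt0 : 0 < (2 : RR) ^- k by rewrite invr_gt0 exprn_gt0.
exists s, (Num.min (d / 2) ((2 : RR) ^- k)), k; split => //.
- by rewrite lt_min invexp2_gt0 andbT divr_gt0.
- by rewrite ge_min lexx orbT.
- apply: subset_trans sub_d; apply: lbase_le.
  have : Num.min (d / 2) ((2 : RR) ^- k) <= d / 2 by rewrite ge_min lexx.
  lra.
Qed.

Lemma descent_sequence t (e : RR) : 0 < e ->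
  exists (T : nat -> Lambda) (E : nat -> RR) (K : nat -> nat),
    [/\ T 0%N = t, E 0%N = e, forall n, 0 < E n &
        forall n, descent_step n (T n) (E n) (T n.+1) (E n.+1) (K n)].
Proof.
move=> e_gt0.
have /choice [g g_step] : forall p : nat * (Lambda * RR), exists q : Lambda * RR * nat,
    0 < p.2.2 -> descent_step p.1 p.2.1 p.2.2 q.1.1 q.1.2 q.2.
  move=> [n [t' e']] /=; have [e'_gt0|e'_le0] := pselect (0 < e').
    by have [s [e'' [k step]]] := descent_step_exists n t' e'_gt0; exists (s, e'', k).
  by exists (t', e', 0%N) => /e'_le0.
pose fix TE n := if n is m.+1 then (g (m, TE m)).1 else (t, e).
have TE_gt0 n : 0 < (TE n).2.
  by elim: n => [|n IH] //; have [] := g_step (n, TE n) IH.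
exists (fun n => (TE n).1), (fun n => (TE n).2), (fun n => (g (n, TE n)).2).
by split=> // n; exact: g_step (n, TE n) (TE_gt0 n).
Qed.

Section DescentLimit.
Variables (T : nat -> Lambda) (E : nat -> RR) (K : nat -> nat).
Hypothesis E_gt0 : forall n, 0 < E n.
Hypothesis T_step : forall n, descent_step n (T n) (E n) (T n.+1) (E n.+1) (K n).

Lemma lbase_descent_nested m c : (m <= c)%N ->
  lbase (T c) (E c) `<=` lbase (T m) (E m).
Proof.
elim: c => [|c IH]; first by rewrite leqn0 => /eqP ->.
rewrite leq_eqVlt => /orP [/eqP -> //|/IH mc]; apply: subset_trans mc.
have [_ _ _ _ sub_c] := T_step c.
have E_le : E c.+1 <= 2 * E c.+1 by have := E_gt0 c.+1; lra.
by move=> u /(lbase_le E_le) /sub_c [].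
Qed.

Lemma lbase_descent m c : (m <= c)%N -> lbase (T m) (E m) (T c).
Proof. by move=> /lbase_descent_nested; apply; exact: lbase_refl. Qed.

Lemma descent_chain m c : (m <= c)%N -> ext (T m) (T c).
Proof. by move=> /lbase_descent []. Qed.

Lemma descent_avoid n : ~ (\bigcup_c rng (T c)) (K n).
Proof.
move=> [c _ cK]; have [_ Ek Kn _ _] := T_step n.
have [[rng_nd _ _] lam_d] := lbase_descent (leq_maxr c n.+1).
have [rng_cd _ _] := descent_chain (leq_maxl c n.+1).
have : (((2 : RR) ^- K n)%:E + lam (T n.+1) <= lam (T (maxn c n.+1)))%E.
  exact: wsumD1_le rng_nd (rng_cd _ cK) Kn.
move: lam_d; rewrite (lamE (T (maxn c n.+1))) (lamE (T n.+1)).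
by rewrite -!EFinD lte_fin lee_fin; lra.
Qed.

Lemma descent_limit : exists u, lbase (T 0%N) (E 0%N) u /\ forall n, F n u.
Proof.
have U_coinf : ~ finite_set (~` \bigcup_c rng (T c)).
  apply/infinite_natP => n; have [_ _ _ nK _] := T_step n.
  by exists (K n) => //; exact: descent_avoid.
have [u [rng_u ext_u]] := chain_union descent_chain U_coinf.
have u_in n : lbase (T n.+1) (2 * E n.+1) u.
  split; first exact: ext_u.
  apply: (@le_lt_trans _ _ (lam (T n.+1) + (E n.+1)%:E)%E).
    rewrite /lam rng_u; apply: (wsum_bigcup_le (m := n.+1)).
      exact: rng_chain_nondecreasing descent_chain.
    by move=> c /lbase_descent [_ /ltW].
  by rewrite lteD2lE ?lam_fin_num // lte_fin; have := E_gt0 n.+1; lra.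
have u_F n : lbase (T n) (E n) u /\ F n u.
  by have [_ _ _ _ sub_n] := T_step n; exact: sub_n (u_in n).
by exists u; split=> [|n]; [exact: (u_F 0%N).1|exact: (u_F n).2].
Qed.

End DescentLimit.
End Baire.

Theorem lemma10p1 : baire_space Lambda.
Proof.
move=> F F_open F_dense O [x Ox] O_open.
have [e e_gt0 sub_O] := O_open x Ox.
have [T [E [K [T0 E0 E_gt0 T_step]]]] := descent_sequence F_open F_dense x e_gt0.
have [u [u_in Fu]] := descent_limit E_gt0 T_step.
exists u; split; last by move=> n _; exact: Fu.
by apply: sub_O; rewrite -T0 -E0.
Qed.
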